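(* Let $V$ be a topological real vector space, $N:V\to\mathbb{R}$ a function, and $\alpha>1$ a real number. The following are equivalent: (1) $N$ is strictly sub-convex and is a Minkowski norm on $V$. (2) $N$ is non-negative, positively homogeneous (i.e. $N(\lambda x)=\lambda N(x)$ for all $x\in V$, $\lambda>0$), continuous, and $N^{\alpha}$ is strictly convex.
   Context: Topological real vector spaces are not assumed Hausdorff. A Minkowski norm on a real vector space $V$ is a function $N:V\to\mathbb{R}$ that is non-negative, satisfies $N(\lambda x)=\lambda N(x)$ for all $x\in V$ and real $\lambda>0$, satisfies $N(x+y)\le N(x)+N(y)$ for all $x,y$, and satisfies $N(x)\neq 0$ for $x\neq 0$. A function $g$ on a convex set is strictly convex if $g((1-t)x+ty)<(1-t)g(x)+tg(y)$ for all distinct $x,y$ and $t\in(0,1)$. For $f:C\to\mathbb{R}$ and $r\in\mathbb{R}$, $S_r(f)=\{x\in C: f(x)\le r\}$. For a subset $S$, $\mathrm{Aff}(S)$ is its affine hull; $\mathrm{ri}(S)$ and $\mathrm{rc}(S)$ are the interior and closure of $S$ in the subspace topology of $\mathrm{Aff}(S)$. $]x,y[=\{(1-t)x+ty: t\in[0,1]\}\setminus\{x,y\}$. A subset $C$ is strictly convex if for any two distinct $x,y\in\mathrm{rc}(C)$ one has $]x,y[\subseteq\mathrm{ri}(C)$. A function $f:C\to\mathbb{R}$ is strictly sub-convex if $S_r(f)$ is strictly convex for every $r\in\mathbb{R}$. *)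

From HB Require Import structures.
From mathcomp Require Import all_boot all_order all_algebra.
From mathcomp Require Import all_classical all_reals all_analysis.
Set Implicit Arguments. Unset Strict Implicit. Unset Printing Implicit Defensive.
Import Order.TTheory GRing.Theory Num.Theory numFieldTopology.Exports.
Local Open Scope classical_set_scope.
Local Open Scope ring_scope.

(* V : topologicalLmodType R is a (not necessarily Hausdorff) topological
   vector space over the real field R (continuous addition, negation and
   scalar multiplication). *)

Section Defs.
Context {R : realType} {V : topologicalLmodType R}.

Definition minkowski_norm (N : V -> R) : Prop :=
  [/\ (forall x, 0 <= N x),
      (forall x (l : R), 0 < l -> N (l *: x) = l * N x),
      (forall x y, N (x + y) <= N x + N y) &
      (forall x, x != 0 -> N x != 0)].

Definition strictly_convex_fun (C : set V) (g : V -> R) : Prop :=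
  forall x y (t : R), C x -> C y -> x != y -> 0 < t < 1 ->
    g ((1 - t) *: x + t *: y) < (1 - t) * g x + t * g y.

Definition sublevel (C : set V) (f : V -> R) (r : R) : set V :=
  [set x | C x /\ f x <= r].

Definition aff_hull (S : set V) : set V :=
  [set y | exists n (c : 'I_n -> R) (x : 'I_n -> V),
     [/\ (forall i, S (x i)), \sum_(i < n) c i = 1 &
         y = \sum_(i < n) c i *: x i]].

(* relative interior: interior of S in the subspace topology of Aff(S) *)
Definition rel_interior (S : set V) : set V :=
  [set x | S x /\ exists U : set V, [/\ open U, U x & U `&` aff_hull S `<=` S]].

(* relative closure: closure of S in the subspace topology of Aff(S) *)
Definition rel_closure (S : set V) : set V :=
  [set x | aff_hull S x /\
     forall U : set V, open U -> U x -> U `&` S !=set0].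

Definition open_segment (x y : V) : set V :=
  [set z | exists2 t : R, 0 <= t <= 1 & z = (1 - t) *: x + t *: y]
  `\` [set x; y].

Definition strictly_convex_set (C : set V) : Prop :=
  forall x y, rel_closure C x -> rel_closure C y -> x != y ->
    open_segment x y `<=` rel_interior C.

Definition strictly_subconvex (C : set V) (f : V -> R) : Prop :=
  forall r : R, strictly_convex_set (sublevel C f r).

End Defs.

From HB Require Import structures.
From mathcomp Require Import all_boot all_order all_algebra.
From mathcomp Require Import all_classical all_reals all_analysis.
From mathcomp Require Import ring lra.
Import Order.TTheory GRing.Theory Num.Theory numFieldTopology.Exports.
Local Open Scope classical_set_scope.
Local Open Scope ring_scope.

(* If N is a Minkowski norm, its unit ball is a neighbourhood of 0: the affine
   hull of any ball is the whole space, and 0 lies on the open chord joining the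
   unit vectors in the directions x0 and -x0, hence in the relative interior of
   the ball.  Subadditivity then gives continuity.  For strict convexity of
   N^alpha, when N x <> N y the triangle inequality reduces it to strict
   convexity of t |-> t^alpha on [0, +oo); when N x = N y = r, open chords of the
   r-ball lie in its relative interior, where N < r by homogeneity.
   Conversely, N^alpha strictly convex forces N x <> 0 for x <> 0 (compare 0
   and x) and convexity of the unit ball, which by homogeneity is the triangle
   inequality; by continuity the relative closure of {N <= r} stays in it, while
   its open chords lie in the open set {N < r}. *)

Section PowR.
Context {R : realType}.

Lemma powR_MVT (a x y : R) : 0 < x < y ->
  exists2 c, x < c < y & y `^ a - x `^ a = a * c `^ (a - 1) * (y - x).
Proof.
move=> /andP[x0 xy].
have D c : c \in `]x, y[ -> is_derive c 1 (@powR R ^~ a) (a * c `^ (a - 1)).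
  by rewrite in_itv /= => /andP[xc _]; apply: is_derive1_powR; exact: lt_trans xc.
have cont : {within [set` `[x, y]], continuous (@powR R ^~ a)}.
  apply: derivable_within_continuous => z; rewrite in_itv /= => /andP[xz _].
  by apply: derivable_powR; rewrite in_itv /= andbT (lt_le_trans x0).
have [c cI ->] := MVT xy D cont.
by exists c; rewrite -?in_itv.
Qed.

Lemma powR_Bernoulli_lt (a u : R) : 1 < a -> 0 <= u -> u != 1 ->
  1 + a * (u - 1) < u `^ a.
Proof.
move=> a1 u0 u1; have a0 : 0 < a by rewrite (lt_trans ltr01).
have a10 : 0 < a - 1 by rewrite subr_gt0.
have [->|un0] := eqVneq u 0; first by rewrite powR0 ?gt_eqF // sub0r mulrN1 subr_lt0.
have up : 0 < u by rewrite lt_neqAle eq_sym un0.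
case: (ltgtP u 1) u1 => // [ult|ugt] _.
- have [c /andP[uc c1] E] := powR_MVT a u 1 (introT andP (conj up ult)).
  have : c `^ (a - 1) < 1 `^ (a - 1).
    by rewrite gt0_ltr_powR ?nnegrE ?ltW // (lt_trans up).
  move: E; rewrite !powR1 => E cp1.
  have : 1 - u `^ a < a * (1 - u).
    rewrite E -mulrA ltr_pM2l // gtr_pMl ?subr_gt0 //.
  lra.
- have [c /andP[uc c1] E] := powR_MVT a 1 u (introT andP (conj ltr01 ugt)).
  have : 1 `^ (a - 1) < c `^ (a - 1).
    by rewrite gt0_ltr_powR ?nnegrE ?ler01 // ltW // (lt_trans ltr01).
  move: E; rewrite !powR1 => E cp1.
  have : a * (u - 1) < u `^ a - 1 by rewrite E -mulrA ltr_pM2l // ltr_pMl ?subr_gt0.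
  lra.
Qed.

Lemma powR_tangent_lt (a m z : R) : 1 < a -> 0 < m -> 0 <= z -> z != m ->
  m `^ a + a * (m `^ a / m) * (z - m) < z `^ a.
Proof.
move=> a1 m0 z0 zm.
have zm1 : z / m != 1.
  by apply: contra_neq zm => /(congr1 ( *%R^~ m)); rewrite divfK ?gt_eqF // mul1r.
have := powR_Bernoulli_lt a (z / m) a1 (divr_ge0 z0 (ltW m0)) zm1.
rewrite -(ltr_pM2l (@powR_gt0 R m a m0)) -powRM ?divr_ge0 ?(ltW m0) //.
rewrite [m * _]mulrC divfK ?gt_eqF //; congr (_ < _).
by field; rewrite gt_eqF.
Qed.

Lemma powR_convex_lt (a x y t : R) : 1 < a -> 0 <= x -> 0 <= y -> x != y -> 0 < t < 1 ->
  ((1 - t) * x + t * y) `^ a < (1 - t) * x `^ a + t * y `^ a.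
Proof.
move=> a1 x0 y0 xy /andP[t0 t1].
have t1' : 0 < 1 - t by rewrite subr_gt0.
set m := (1 - t) * x + t * y.
have xm : x != m.
  apply: contra_neq xy => xE; have /eqP : t * (y - x) = 0 by rewrite /m in xE; lra.
  by rewrite mulf_eq0 gt_eqF //= subr_eq0 eq_sym => /eqP.
have ym : y != m.
  apply: contra_neq xy => yE; have /eqP : (1 - t) * (x - y) = 0 by rewrite /m in yE; lra.
  by rewrite mulf_eq0 gt_eqF //= subr_eq0 => /eqP.
have m0 : 0 < m.
  have ty0 := mulr_ge0 (ltW t0) y0; have tx0 := mulr_ge0 (ltW t1') x0.
  rewrite lt_neqAle eq_sym; apply/andP; split; last by rewrite /m; lra.
  apply: contra_neq xm => m0; rewrite m0; apply/eqP; rewrite eq_le x0 andbT.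
  by rewrite -(pmulr_rle0 _ t1'); rewrite /m in m0; lra.
have tx := powR_tangent_lt a m x a1 m0 x0 xm; have ty := powR_tangent_lt a m y a1 m0 y0 ym.
have -> : m `^ a = (1 - t) * (m `^ a + a * (m `^ a / m) * (x - m))
                  + t * (m `^ a + a * (m `^ a / m) * (y - m)) by rewrite /m; ring.
by apply: ltrD; rewrite ltr_pM2l.
Qed.

Lemma ltr_powR2r (a x y : R) : 0 < a -> 0 <= x -> 0 <= y -> (x `^ a < y `^ a) = (x < y).
Proof.
move=> a0 x0 y0.
by apply: (leW_mono_in (le_mono_in (gt0_ltr_powR a0))); rewrite ?nnegrE.
Qed.
End PowR.

Section TopologicalLmodule.
Context {R : realType} {V : topologicalLmodType R}.

Lemma scalel_continuousT (z : V) : continuous (fun l : R^o => l *: z).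
Proof.
by move=> l; apply: (cvg_comp2 cvg_id (cvg_cst z) (@scale_continuous R V (l, z))).
Qed.

Lemma scale_subr_continuous (e : R) (a : V) : continuous (fun x : V => e *: (x - a)).
Proof.
move=> x; apply: (cvg_comp2 (cvg_cst (e : R^o)) _ (@scale_continuous R V (_, _))).
exact: (cvg_comp2 cvg_id (cvg_cst _) (@add_continuous V (_, _))).
Qed.

Lemma convex_comb_subl (x y : V) (t : R) : (1 - t) *: x + t *: y - x = t *: (y - x).
Proof. by rewrite scalerBl scale1r scalerBr addrAC [x - _ - x]addrAC subrr add0r addrC. Qed.

Lemma open_segmentP (x y z : V) : open_segment x y z ->
  exists2 t : R, 0 < t < 1 & z = (1 - t) *: x + t *: y.
Proof.
move=> [[t /andP[t0 t1] ->]] nxy; exists t => //.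
rewrite !lt_neqAle t0 t1 !andbT; apply/andP; split.
  by apply: contra_not_neq nxy => <-; left; rewrite subr0 scale1r scale0r addr0.
by apply: contra_not_neq nxy => ->; right; rewrite subrr scale0r add0r scale1r.
Qed.

Lemma open_segment_comb (x y : V) (t : R) : x != y -> 0 < t < 1 ->
  open_segment x y ((1 - t) *: x + t *: y).
Proof.
move=> xy /andP[t0 t1]; split; first by exists t; rewrite ?ltW.
have yx0 : y - x != 0 by rewrite subr_eq0 eq_sym.
have xy0 : x - y != 0 by rewrite subr_eq0.
move=> [zx|zy].
- have /eqP : t *: (y - x) = 0 by rewrite -convex_comb_subl zx subrr.
  by rewrite scaler_eq0 (negbTE yx0) orbF gt_eqF.
- have /eqP : (1 - t) *: (x - y) = 0.
    have tE : 1 - (1 - t) = t by ring.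
    by rewrite -convex_comb_subl tE [t *: y + _]addrC zy subrr.
  by rewrite scaler_eq0 (negbTE xy0) orbF gt_eqF ?subr_gt0.
Qed.

Lemma sub_rel_closure {S : set V} : S `<=` rel_closure S.
Proof.
move=> x Sx; split; last by move=> U _ Ux; exists x.
exists 1%N, (fun _ => 1), (fun _ => x).
by rewrite !big_ord1 scale1r.
Qed.

Lemma rel_closure_sublevel_le (f : V -> R) (r : R) : continuous f ->
  rel_closure (sublevel setT f r) `<=` [set x | f x <= r].
Proof.
move=> cf x [_ clx] /=; rewrite leNgt; apply/negP => rx.
have oU : open (f @^-1` [set s | r < s]) by apply: open_comp => // s _; exact: cf.
have [w [/= rw [_ wr]]] := clx _ oU rx; lra.
Qed.

Lemma sublevel_lt_rel_interior (f : V -> R) (r : R) : continuous f ->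
  [set x | f x < r] `<=` rel_interior (sublevel setT f r).
Proof.
move=> cf x xr; split; first by split => //; exact: ltW.
exists (f @^-1` [set s | s < r]); split => //.
  by apply: open_comp => [s _|]; [exact: cf|exact: open_lt].
by move=> w [/= wr _]; split => //; exact: ltW.
Qed.

End TopologicalLmodule.

Section PositivelyHomogeneous.
Context {R : realType} {V : topologicalLmodType R} {N : V -> R}.
Hypothesis N_ge0 : forall x, 0 <= N x.
Hypothesis N_homog : forall x (l : R), 0 < l -> N (l *: x) = l * N x.

Lemma homog0 : N 0 = 0.
Proof. by have := @N_homog 0 2 (ltr0Sn R 1); rewrite scaler0 => E; lra. Qed.

Lemma homog_normalize x : N x != 0 -> N ((N x)^-1 *: x) = 1.
Proof.
move=> Nx0; have Nx : 0 < N x by rewrite lt_neqAle eq_sym Nx0 N_ge0.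
by rewrite N_homog ?invr_gt0 // mulVf.
Qed.

Lemma aff_hull_homog_sublevel (r : R) : 0 < r -> aff_hull (sublevel setT N r) = setT.
Proof.
move=> r0; apply/seteqP; split => // v _.
pose k := r / (N v + 1).
have k0 : 0 < k by rewrite divr_gt0 // ltr_wpDl.
exists 2%N, (fun i => if val i == 0%N then k^-1 else 1 - k^-1),
  (fun i => if val i == 0%N then k *: v else 0); split.
- move=> i; split => //; case: ifP => _; last by rewrite homog0 ltW.
  rewrite N_homog // /k mulrAC ler_pdivrMr ?ltr_wpDl // ler_pM2l //; lra.
- by rewrite !big_ord_recl big_ord0 /= addr0; lra.
- by rewrite !big_ord_recl big_ord0 /= addr0 scaler0 addr0 scalerA mulVf ?gt_eqF ?scale1r.
Qed.

Lemma rel_interior_homog_sublevel_lt (r : R) z : 0 < r ->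
  rel_interior (sublevel setT N r) z -> N z < r.
Proof.
move=> r0 [[_ zr] [U [oU Uz sU]]].
rewrite aff_hull_homog_sublevel // setIT in sU.
rewrite lt_neqAle zr andbT; apply/negP => /eqP Nz.
have : nbhs (1 : R^o) ((fun l : R^o => l *: z) @^-1` U).
  by apply: (scalel_continuousT z 1); rewrite /= scale1r; exact: open_nbhs_nbhs.
move=> /nbhs_ballP [e /= e0 /(_ (1 + e / 2))].
rewrite /ball /= opprD addrA subrr sub0r normrN gtr0_norm ?divr_gt0 //.
rewrite ltr_pdivrMr // ltr_pMr // ltr1n => /(_ isT) /sU [_ /=].
rewrite N_homog ?Nz ?addr_gt0 ?divr_gt0 // => H.
have : r < (1 + e / 2) * r by rewrite ltr_pMl // ltrDl divr_gt0.
lra.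
Qed.

Lemma subadditive_continuous : (forall x y, N (x + y) <= N x + N y) ->
  nbhs (0 : V) [set x | N x <= 1] -> continuous N.
Proof.
move=> N_subadd N_ball a; apply/cvgrPdist_le => e e0.
have near_a (c : R) : \forall s \near a, N (c *: (s - a)) <= 1.
  have := scale_subr_continuous c a a.
  by rewrite /continuous_at subrr scaler0 => /(_ _ N_ball).
near=> s.
have sa : N (s - a) <= e.
  have : N (e^-1 *: (s - a)) <= 1 by near: s; exact: near_a.
  by rewrite N_homog ?invr_gt0 // ler_pdivrMl // mulr1.
have as_ : N (a - s) <= e.
  have : N (- e^-1 *: (s - a)) <= 1 by near: s; exact: near_a.
  by rewrite scaleNr -scalerN opprB N_homog ?invr_gt0 // ler_pdivrMl // mulr1.
have := N_subadd a (s - a); have := N_subadd s (a - s).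
rewrite (addrC a (s - a)) (addrC s (a - s)) !subrK => T1 T2.
by rewrite ler_norml; apply/andP; split; lra.
Unshelve. all: by end_near.
Qed.

Section StrictlyConvexPower.
Context {alpha : R}.
Hypothesis alpha_gt1 : 1 < alpha.
Hypothesis N_powR_convex : strictly_convex_fun setT (fun x => N x `^ alpha).

Let alpha_gt0 : 0 < alpha. Proof. exact: lt_trans ltr01 alpha_gt1. Qed.

Lemma strictly_convex_powR_neq0 x : x != 0 -> N x != 0.
Proof.
move=> x0; apply/negP => /eqP Nx.
have t01 : 0 < (2 : R)^-1 < 1 by rewrite invr_gt0 ltr0n /= invf_lt1 ?ltr1n.
have := N_powR_convex _ _ _ I I (_ : 0 != x) t01; rewrite eq_sym => /(_ x0).
rewrite scaler0 add0r N_homog ?invr_gt0 // Nx homog0 mulr0 powR0 ?gt_eqF //.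
by rewrite !mulr0 addr0 ltxx.
Qed.

Lemma strictly_convex_powR_subadditive x y : N (x + y) <= N x + N y.
Proof.
have [->|x0] := eqVneq x 0; first by rewrite add0r homog0 add0r.
have [->|y0] := eqVneq y 0; first by rewrite addr0 homog0 addr0.
have Nx0 := strictly_convex_powR_neq0 _ x0; have Ny0 := strictly_convex_powR_neq0 _ y0.
have Nx : 0 < N x by rewrite lt_neqAle eq_sym Nx0 N_ge0.
have Ny : 0 < N y by rewrite lt_neqAle eq_sym Ny0 N_ge0.
set u := (N x)^-1 *: x; set v := (N y)^-1 *: y; set t := N y / (N x + N y).
have Nxy : 0 < N x + N y by rewrite addr_gt0.
have xyE : x + y = (N x + N y) *: ((1 - t) *: u + t *: v).
  rewrite scalerDr !scalerA.
  have -> : (N x + N y) * (1 - t) * (N x)^-1 = 1 by rewrite /t; field; rewrite ?gt_eqF.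
  have -> : (N x + N y) * t * (N y)^-1 = 1 by rewrite /t; field; rewrite ?gt_eqF.
  by rewrite !scale1r.
have Nw : N ((1 - t) *: u + t *: v) <= 1.
  have [<-|uv] := eqVneq u v; first by rewrite -scalerDl subrK scale1r homog_normalize.
  have t01 : 0 < t < 1 by rewrite divr_gt0 //= ltr_pdivrMr // mul1r ltr_pwDl.
  have := N_powR_convex _ _ _ I I uv t01; rewrite !homog_normalize // powR1 !mulr1 subrK.
  by move=> Nw; apply/ltW; rewrite -(ltr_powR2r _ _ _ alpha_gt0) ?N_ge0 ?ler01 // powR1.
by rewrite xyE N_homog // -[X in _ <= X]mulr1 ler_pM2l.
Qed.

Lemma strictly_convex_powR_subconvex : continuous N -> strictly_subconvex setT N.
Proof.
move=> N_cont r x y /(rel_closure_sublevel_le _ _ N_cont) /= xr.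
move=> /(rel_closure_sublevel_le _ _ N_cont) /= yr xy z /open_segmentP [t t01 ->].
apply: sublevel_lt_rel_interior => //=.
have r0 : 0 <= r := le_trans (N_ge0 x) xr.
rewrite -(ltr_powR2r _ _ _ alpha_gt0) ?N_ge0 //.
apply: (lt_le_trans (N_powR_convex _ _ _ I I xy t01)).
have /andP[t0 t1] := t01.
have powR_le w : N w <= r -> N w `^ alpha <= r `^ alpha.
  by move=> wr; apply: ge0_ler_powR; rewrite ?nnegrE ?N_ge0 ?(ltW alpha_gt0).
have : (1 - t) * N x `^ alpha <= (1 - t) * r `^ alpha.
  by apply: ler_wpM2l; [rewrite subr_ge0 ltW | exact: powR_le].
have : t * N y `^ alpha <= t * r `^ alpha by apply: ler_wpM2l; [exact: ltW | exact: powR_le].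
lra.
Qed.

End StrictlyConvexPower.

Section StrictlySubconvex.
Hypothesis N_subconvex : strictly_subconvex setT N.
Hypothesis N_subadd : forall x y, N (x + y) <= N x + N y.
Hypothesis N_neq0 : forall x, x != 0 -> N x != 0.

Lemma subconvex_nbhs0_unit_ball : nbhs (0 : V) [set x | N x <= 1].
Proof.
have [[x0 x00]|V0] := pselect (exists x0 : V, x0 != 0); last first.
  apply: (@filterS _ _ _ setT); last exact: filterT.
  move=> x _ /=; suff -> : x = 0 by rewrite homog0.
  by apply/eqP; apply: contra_notT V0 => x0; exists x.
have mx00 : - x0 != 0 by rewrite oppr_eq0.
set p := N x0; set q := N (- x0).
have p0 : 0 < p by rewrite lt_neqAle eq_sym N_neq0 ?N_ge0.
have q0 : 0 < q by rewrite lt_neqAle eq_sym N_neq0 ?N_ge0.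
set P := p^-1 *: x0; set Q := q^-1 *: (- x0); set t := q / (p + q).
have NP : N P = 1 by rewrite homog_normalize ?N_neq0.
have NQ : N Q = 1 by rewrite homog_normalize ?N_neq0.
have t01 : 0 < t < 1 by rewrite divr_gt0 ?addr_gt0 //= ltr_pdivrMr ?addr_gt0 // mul1r ltr_pwDl.
have PQ0 : (1 - t) *: P + t *: Q = 0.
  rewrite !scalerA scalerN.
  have -> : (1 - t) * p^-1 = t * q^-1 by rewrite /t; field; rewrite ?gt_eqF ?addr_gt0.
  by rewrite subrr.
have PQ : P != Q.
  apply: contra_eq_neq PQ0 => <-; rewrite -scalerDl subrK scale1r.
  by apply: contra_eq_neq NP => ->; rewrite homog0 eq_sym oner_neq0.
have SP : sublevel setT N 1 P by split => //; rewrite NP.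
have SQ : sublevel setT N 1 Q by split => //; rewrite NQ.
have := N_subconvex _ _ _ (sub_rel_closure _ SP) (sub_rel_closure _ SQ) PQ.
move=> /(_ 0); rewrite -{1}PQ0 => /(_ (open_segment_comb _ _ _ PQ t01)) [_ [U [oU U0 sU]]].
rewrite aff_hull_homog_sublevel // setIT in sU.
by apply: filterS (open_nbhs_nbhs (conj oU U0)) => w /sU [].
Qed.

Lemma subconvex_strictly_convex_powR alpha : 1 < alpha ->
  strictly_convex_fun setT (fun x => N x `^ alpha).
Proof.
move=> alpha_gt1 x y t _ _ xy t01; have /andP[t0 t1] := t01.
have alpha_gt0 : 0 < alpha := lt_trans ltr01 alpha_gt1.
have Nz : N ((1 - t) *: x + t *: y) <= (1 - t) * N x + t * N y.
  by rewrite -!N_homog ?subr_gt0 //; apply: N_subadd.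
have [Nxy|Nxy] := eqVneq (N x) (N y); last first.
  apply: le_lt_trans (powR_convex_lt _ _ _ _ alpha_gt1 (N_ge0 x) (N_ge0 y) Nxy t01).
  have comb_ge0 : 0 <= (1 - t) * N x + t * N y.
    by rewrite addr_ge0 ?mulr_ge0 ?N_ge0 ?subr_ge0 ?ltW.
  by apply: ge0_ler_powR; rewrite ?nnegrE ?N_ge0 ?(ltW alpha_gt0).
have Ny : 0 < N y.
  rewrite lt_neqAle N_ge0 andbT eq_sym; have [y0|/N_neq0 //] := eqVneq y 0.
  by rewrite -Nxy N_neq0 // -y0.
have Sx : sublevel setT N (N y) x by split => //; rewrite Nxy.
have Sy : sublevel setT N (N y) y by [].
have := N_subconvex _ _ _ (sub_rel_closure _ Sx) (sub_rel_closure _ Sy) xy.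
move=> /(_ _ (open_segment_comb _ _ _ xy t01)) /(rel_interior_homog_sublevel_lt _ _ Ny) zr.
by rewrite Nxy -mulrDl subrK mul1r ltr_powR2r ?N_ge0 ?ltW.
Qed.

End StrictlySubconvex.

End PositivelyHomogeneous.

Theorem mainTheorem2 (R : realType) (V : topologicalLmodType R)
    (N : V -> R) (alpha : R) (halpha : 1 < alpha) :
  (strictly_subconvex setT N /\ minkowski_norm N) <->
  [/\ (forall x, 0 <= N x),
      (forall x (l : R), 0 < l -> N (l *: x) = l * N x),
      continuous N &
      strictly_convex_fun setT (fun x => N x `^ alpha)].
Proof.
split.
- move=> [N_subconvex [N_ge0 N_homog N_subadd N_neq0]]; split => //.
    by apply: subadditive_continuous; last exact: subconvex_nbhs0_unit_ball.
  exact: subconvex_strictly_convex_powR.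
- move=> [N_ge0 N_homog N_cont N_powR_convex].
  split; first exact: (strictly_convex_powR_subconvex N_ge0 halpha N_powR_convex).
  split => //.
  + exact: (strictly_convex_powR_subadditive N_ge0 N_homog halpha N_powR_convex).
  + exact: (strictly_convex_powR_neq0 N_homog halpha N_powR_convex).
Qed.
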